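(* Let $\mathbb{F}\in\{\mathbb{R},\mathbb{C}\}$, $A\in\mathbb{F}^{m\times n}$, $b\in\mathbb{F}^m$, $K\ge1$. Let $x'$ be a stationary point of $\mathcal{K}_{K,reg}$ with $\mathrm{card}(x')=K$, set $z'=(I-A^*A)x'+A^*b$, let $\tilde z'$ be the entries of $z'$ sorted by decreasing magnitude, and assume $$|\tilde z'_{K+1}|<(2\beta_{2K}^2-1)|\tilde z'_K|.$$ If $x''\neq x'$ is another stationary point of $\mathcal{K}_{K,reg}$, then $\mathrm{card}(x'')>K$.
   Context: $\mathrm{card}(x)$ is the number of nonzero entries, $P_K=\{x:\mathrm{card}(x)\le K\}$, $\iota_{P_K}$ its indicator function; $\beta_k=\inf\{\|Ax\|_2/\|x\|_2:x\ne0,\ \mathrm{card}(x)\le k\}$. $\mathcal{Q}_2(\iota_{P_K})$ is the function such that $\mathcal{Q}_2(\iota_{P_K})(x)+\|x\|^2$ is the lower semicontinuous convex envelope of $\iota_{P_K}(x)+\|x\|^2$; explicitly, with $\tilde x$ the entries of $x$ sorted so that $|\tilde x_j|$ is non-increasing, $\mathcal{Q}_2(\iota_{P_K})(x)=\frac{1}{k_*}\big(\sum_{j>K-k_*}|\tilde x_j|\big)^2-\sum_{j>K-k_*}|\tilde x_j|^2$, where $k_*$ is the largest $k\in\{1,\dots,K\}$ with $\sum_{j>K-k}|\tilde x_j|-k|\tilde x_{K+1-k}|\ge0$. $\mathcal{K}_{K,reg}(x)=\mathcal{Q}_2(\iota_{P_K})(x)+\|Ax-b\|_2^2$. $A^*$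 is the conjugate transpose. A stationary point of a function $g$ is a point $x$ with $0$ in the Fréchet subdifferential $\hat\partial g(x)$, i.e. the set of $v$ with $\liminf_{y\to x,y\ne x}(g(y)-g(x)-\mathrm{Re}\langle v,y-x\rangle)/\|y-x\|\ge0$. *)

From HB Require Import structures.
From mathcomp Require Import all_boot all_order all_algebra.
From mathcomp Require Import all_classical all_reals.
From mathcomp.real_closed Require Import complex.
Set Implicit Arguments. Unset Strict Implicit. Unset Printing Implicit Defensive.
Import Order.TTheory GRing.Theory Num.Theory.
Local Open Scope ring_scope.

(* Generic setting: scalars F (F = R or F = R[i]) with a conjugation [cj],  *)
(* a real-valued modulus [md] and a real part [re].  Vectors in F^n are     *)

Section Generic.
Variables (R : realType) (F : comNzRingType)
  (cj : F -> F) (md : F -> R) (re : F -> R).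

Definition card {n} (x : 'cV[F]_n) : nat := #|[set i | x i 0 != 0]|.

Definition sqnorm {n} (x : 'cV[F]_n) : R := \sum_(i < n) md (x i 0) ^+ 2.
Definition norm2 {n} (x : 'cV[F]_n) : R := Num.sqrt (sqnorm x).

Definition adj {m n} (A : 'M[F]_(m, n)) : 'M[F]_(n, m) := map_mx cj A^T.

Definition reinner {n} (v w : 'cV[F]_n) : R := re (\sum_(i < n) cj (v i 0) * w i 0).

(* magnitudes |x_i| sorted non-increasingly; (sortmag x)`_j = |x~_(j+1)|  *)
(* (0-indexed; padded with 0 beyond n)                                     *)
Definition sortmag {n} (x : 'cV[F]_n) : seq R :=
  sort (fun a b => b <= a) [seq md (x i 0) | i <- enum 'I_n].

(* |x~_j| with 1-based index j *)
Definition xt {n} (x : 'cV[F]_n) (j : nat) : R := nth 0 (sortmag x) j.-1.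

Definition kstar_cond {n} (K : nat) (x : 'cV[F]_n) (k : nat) : bool :=
  0 <= \sum_((K - k).+1 <= j < n.+1) xt x j - k%:R * xt x (K.+1 - k).

Definition kstar {n} (K : nat) (x : 'cV[F]_n) : nat :=
  \max_(k < K.+1 | (1 <= k)%N && kstar_cond K x k) k.

(* Q_2(iota_{P_K})(x), explicit formula *)
Definition Q2 {n} (K : nat) (x : 'cV[F]_n) : R :=
  let k := kstar K x in
  (k%:R)^-1 * (\sum_((K - k).+1 <= j < n.+1) xt x j) ^+ 2
  - \sum_((K - k).+1 <= j < n.+1) xt x j ^+ 2.

Definition Kreg {m n} (A : 'M[F]_(m, n)) (b : 'cV[F]_m) (K : nat)
  (x : 'cV[F]_n) : R := Q2 K x + sqnorm (A *m x - b).

(* Fréchet subdifferential: v \in hat-partial g(x) iff                      *)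
(* liminf_{y -> x, y <> x} (g y - g x - Re<v, y - x>) / ||y - x|| >= 0,    *)
(* written out with epsilon/delta.                                          *)
Definition frechet_subdiff {n} (g : 'cV[F]_n -> R) (x v : 'cV[F]_n) : Prop :=
  forall eps : R, 0 < eps -> exists2 delta : R, 0 < delta &
    forall y : 'cV[F]_n, 0 < norm2 (y - x) < delta ->
      - eps <= (g y - g x - reinner v (y - x)) / norm2 (y - x).

Definition stationary {n} (g : 'cV[F]_n -> R) (x : 'cV[F]_n) : Prop :=
  frechet_subdiff g x 0.

Definition beta {m n} (A : 'M[F]_(m, n)) (k : nat) : R :=
  inf [set r : R | exists x : 'cV[F]_n,
         [/\ x != 0, (card x <= k)%N & r = norm2 (A *m x) / norm2 x]].

Definition thm53_claim : Prop :=
  forall (m n : nat) (A : 'M[F]_(m, n)) (b : 'cV[F]_m) (K : nat)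
         (x' x'' : 'cV[F]_n),
    (1 <= K)%N ->
    stationary (Kreg A b K) x' ->
    card x' = K ->
    let z' := (1%:M - adj A *m A) *m x' + adj A *m b in
    xt z' K.+1 < (2 * beta A (2 * K) ^+ 2 - 1) * xt z' K ->
    x'' != x' ->
    stationary (Kreg A b K) x'' ->
    (K < card x'')%N.

End Generic.

From Pilot Require Import Defs.
From HB Require Import structures.
From mathcomp Require Import all_boot all_order all_algebra.
From mathcomp Require Import all_classical all_reals.
From mathcomp.real_closed Require Import complex.
From mathcomp Require Import ring lra zify.
Import Order.TTheory GRing.Theory Num.Theory.
Local Open Scope ring_scope.
Set Implicit Arguments. Unset Strict Implicit. Unset Printing Implicit Defensive.

(* Write z = x - A^*(Ax - b) for the gradient step at x, and let x be stationary
   for K_{K,reg} with card x <= K.  On the support of x we have z = x: moving one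
   such coordinate keeps the cardinality at most K, where Q_2 vanishes, so the
   least-squares gradient must vanish there.  If card x < K the same holds off the
   support, so z = 0 there.  If card x = K and x_j = 0, then |z_j| <= |x_i| for every
   i in the support: moving x_j to t z_j decreases the data term at rate 2|z_j|^2,
   while Q_2 grows at rate at most 2|z_j||x_i|.

   For two such points x', x'' let d = x' - x''.  Since card d <= 2K,
   Re<d, z' - z''> = |d|^2 - |Ad|^2 <= (1 - beta_2K^2)|d|^2.  Expanding the left side
   coordinatewise and pairing the coordinates of supp x' \ supp x'' with those of
   supp x'' \ supp x', the gap condition makes the total strictly larger unless
   d = 0. *)

Lemma psumr_gt0 (R : numDomainType) (I : finType) (P : pred I) (f : I -> R) i0 :
  P i0 -> 0 < f i0 -> (forall i, P i -> 0 <= f i) -> 0 < \sum_(i | P i) f i.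
Proof.
move=> Pi0 fi0 f_ge0; rewrite lt_def sumr_ge0 // andbT psumr_neq0 //.
by apply/hasP; exists i0; rewrite ?mem_index_enum ?Pi0.
Qed.

Lemma sum_gt0_pairing (R : realDomainType) (I : finType) (P Q : {set I}) (f : I -> R) :
  [disjoint P & Q] -> (0 < #|P|)%N -> (#|Q| <= #|P|)%N ->
  (forall i, i \notin P -> i \notin Q -> 0 <= f i) ->
  (forall i j, i \in P -> j \in Q -> 0 < f i + f j) ->
  ((#|Q| < #|P|)%N -> forall i, i \in P -> 0 < f i) ->
  0 < \sum_i f i.
Proof.
move=> PQ0 P_gt0 QP f_out f_pair f_P; have [i0 i0P] := card_gt0P P_gt0.
rewrite (bigID [in P]) /= [X in _ + X](bigID [in Q]) /=.
rewrite [X in _ + (X + _)](eq_bigl [in Q]) => [|i]; last first.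
  by case: (boolP (i \in Q)) => iQ; rewrite ?andbF // (disjointFl PQ0 iQ).
set SP := \sum_(i in P) f i; set SQ := \sum_(i in Q) f i.
suff SPQ_gt0 : 0 < SP + SQ.
  by rewrite addrA ltr_wpDr // sumr_ge0 // => i /andP[iP iQ]; apply: f_out.
have : 0 < #|P|%:R * (SP + SQ); last by rewrite pmulr_rgt0 // ltr0n.
case: (posnP #|Q|) => [/cards0_eq Q0 | Q_gt0].
  have QP_lt : (#|Q| < #|P|)%N by rewrite Q0 cards0.
  rewrite /SQ Q0 big_set0 addr0 mulr_gt0 ?ltr0n //.
  by apply: (psumr_gt0 i0P (f_P QP_lt i0 i0P)) => i /(f_P QP_lt) /ltW.
have [j0 j0Q] := card_gt0P Q_gt0.
have pairs : \sum_(i in P) \sum_(j in Q) (f i + f j) = #|Q|%:R * SP + #|P|%:R * SQ.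
  under eq_bigr do rewrite big_split /= sumr_const.
  by rewrite big_split /= sumrMnl sumr_const !mulr_natl.
have pairs_gt0 : 0 < \sum_(i in P) \sum_(j in Q) (f i + f j).
  have inner_gt0 i : i \in P -> 0 < \sum_(j in Q) (f i + f j).
    by move=> iP; apply: (psumr_gt0 j0Q (f_pair _ _ iP j0Q)) => j jQ; apply/ltW/f_pair.
  by apply: (psumr_gt0 i0P (inner_gt0 _ i0P)) => i /inner_gt0 /ltW.
have rest_ge0 : 0 <= (#|P| - #|Q|)%:R * SP.
  case: (ltnP #|Q| #|P|) => [QP_lt | PQ_le]; last first.
    by rewrite (_ : (#|P| - #|Q|)%N = 0%N) ?mul0r //; apply/eqP; rewrite subn_eq0.
  by rewrite mulr_ge0 // sumr_ge0 // => i /(f_P QP_lt) /ltW.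
have -> : #|P|%:R * (SP + SQ) = (#|P| - #|Q|)%:R * SP + (#|Q|%:R * SP + #|P|%:R * SQ).
  by rewrite natrB //; ring.
by rewrite -pairs; lra.
Qed.

Lemma sqr_sum_le (R : realFieldType) (f : nat -> R) p q :
  (\sum_(p <= j < q) f j) ^+ 2 <= (q - p)%:R * \sum_(p <= j < q) f j ^+ 2.
Proof.
case: (posnP (q - p)) => [qp0 | qp_gt0].
  have qp : (q <= p)%N by lia.
  by rewrite !big_geq // mulr0 expr0n.
set k : R := (q - p)%:R; set S := \sum_(p <= j < q) f j; pose mu := S / k.
have k_gt0 : 0 < k by rewrite ltr0n.
have : \sum_(p <= j < q) (2 * mu * f j - mu ^+ 2) <= \sum_(p <= j < q) f j ^+ 2.
  by apply: ler_sum => j _; have := sqr_ge0 (f j - mu); nra.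
rewrite sumrB -mulr_sumr sumr_const_nat -/S -[mu ^+ 2 *+ _]mulr_natl -/k => h.
have -> : S ^+ 2 = k * (2 * mu * S - k * mu ^+ 2) by rewrite /mu; field; rewrite gt_eqF.
by rewrite ler_pM2l.
Qed.

Section SortedMagnitudes.
Variables (R : realType) (F : comNzRingType) (md : F -> R).
Hypothesis md_ge0 : forall a, 0 <= md a.
Variable n : nat.
Implicit Types (x : 'cV[F]_n) (v : R).

Lemma size_sortmag x : size (sortmag md x) = n.
Proof. by rewrite size_sort size_map size_enum_ord. Qed.

Lemma count_sortmag x (P : pred R) :
  count P (sortmag md x) = #|[set i | P (md (x i 0))]|.
Proof.
by rewrite (permP (permEl (perm_sort _ _))) count_map cardsE cardE -size_filter enumT.
Qed.

Lemma xt_ge0 x j : 0 <= xt md x j.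
Proof.
rewrite /xt; case: (ltnP j.-1 (size (sortmag md x))) => h; last by rewrite nth_default.
by move: (mem_nth 0 h); rewrite mem_sort => /mapP [i _ ->].
Qed.

Lemma xt_antimono x j k : (0 < j)%N -> (j <= k)%N -> xt md x k <= xt md x j.
Proof.
move=> j_gt0 jk; rewrite /xt.
case: (ltnP k.-1 (size (sortmag md x))) => hk; last by rewrite (nth_default _ hk) xt_ge0.
apply: (sorted_leq_nth (leT := fun a b => b <= a)) => //.
- by move=> a b c /= ab ca; apply: le_trans ca ab.
- by apply: sort_sorted => a b; apply: le_total.
- by apply: leq_ltn_trans hk; lia.
- by lia.
Qed.

Lemma xt_le_of_card v x k : 0 <= v -> (0 < k)%N ->
  (#|[set i | (v < md (x i 0))%R]| < k)%N -> xt md x k <= v.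
Proof.
move=> v_ge0 k_gt0 few; rewrite leNgt; apply/negP => v_lt.
have k_le : (k <= size (sortmag md x))%N.
  rewrite leqNgt; apply/negP => big_k; move: v_lt.
  by rewrite /xt nth_default ?ltNge ?v_ge0 // -ltnS prednK.
suff : (k <= count (fun a => (v < a)%R) (sortmag md x))%N by rewrite count_sortmag; lia.
rewrite -(cat_take_drop k (sortmag md x)) count_cat; apply: leq_trans (leq_addr _ _).
set s := take k _; suff -> : count (fun a => (v < a)%R) s = size s by rewrite size_takel.
apply/eqP; rewrite -all_count; apply/(all_nthP (0 : R)) => i.
rewrite size_takel // => ik; rewrite nth_take //.
by apply: lt_le_trans v_lt _; apply: (xt_antimono x (j := i.+1)).
Qed.

Lemma le_xt_of_card v x k : (0 < k)%N ->
  (k <= #|[set i | (v <= md (x i 0))%R]|)%N -> v <= xt md x k.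
Proof.
move=> k_gt0 many; rewrite leNgt; apply/negP => v_gt.
suff : (count (fun a => (v <= a)%R) (sortmag md x) < k)%N by rewrite count_sortmag; lia.
rewrite -(cat_take_drop k.-1 (sortmag md x)) count_cat.
have -> : count (fun a => (v <= a)%R) (drop k.-1 (sortmag md x)) = 0%N.
  apply/eqP; rewrite -leqn0 leqNgt -has_count; apply/(has_nthP (0 : R)) => -[i _].
  rewrite nth_drop => le_vi.
  have le_i : xt md x (k.-1 + i).+1 <= xt md x k by apply: xt_antimono => //; lia.
  by have := le_lt_trans (le_trans le_vi le_i) v_gt; rewrite ltxx.
rewrite addn0; apply: leq_ltn_trans (count_size _ _) _.
by rewrite size_take_min; lia.
Qed.

Lemma sum_xt_tail_le v x K : 0 <= v ->
  (#|[set i | (v < md (x i 0))%R]| <= K)%N ->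
  (#|[set i | (0 < md (x i 0))%R]| <= K.+1)%N ->
  \sum_(K.+1 <= l < n.+1) xt md x l <= v.
Proof.
move=> v_ge0 few_v few_0; case: (ltnP K n) => Kn; last by rewrite big_geq.
rewrite big_ltn ?ltnS // big_nat big1 ?addr0 => [|l /andP[lK _]].
  by apply: xt_le_of_card; rewrite ?ltnS.
apply/le_anti; rewrite xt_ge0 andbT.
exact: xt_le_of_card (lexx 0) (leq_ltn_trans (leq0n _) lK) (leq_ltn_trans few_0 lK).
Qed.

Section TopEntries.
Variables (x : 'cV[F]_n) (S : {set 'I_n}).
Hypothesis S_top : forall i j, i \in S -> j \notin S -> md (x j 0) <= md (x i 0).

Lemma xt_le_top i : i \in S -> xt md x #|S| <= md (x i 0).
Proof.
move=> iS; apply: xt_le_of_card => //; first by apply/card_gt0P; exists i.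
rewrite (cardsD1 i S) iS add1n ltnS; apply: subset_leq_card.
apply/fintype.subsetP => l; rewrite !inE => lt_il; apply/andP; split.
  by apply: contraTneq lt_il => ->; rewrite ltxx.
by apply: contraTT lt_il => lS; rewrite -leNgt S_top.
Qed.

Lemma nontop_le_xt j : j \notin S -> md (x j 0) <= xt md x #|S|.+1.
Proof.
move=> jS; apply: le_xt_of_card => //.
have -> : #|S|.+1 = #|j |: S| by rewrite cardsU1 jS.
apply: subset_leq_card; apply/fintype.subsetP => l; rewrite !inE.
by case/orP => [/eqP -> | lS]; [rewrite lexx | apply: S_top].
Qed.
End TopEntries.

End SortedMagnitudes.

Section Q2Bounds.
Variables (R : realType) (F : comNzRingType) (md : F -> R).
Hypothesis md_ge0 : forall a, 0 <= md a.
Variables (n K : nat) (y : 'cV[F]_n).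
Hypothesis K_gt0 : (0 < K)%N.

Lemma kstar_valid :
  [/\ (0 < kstar md K y)%N, (kstar md K y <= K)%N & kstar_cond md K y (kstar md K y)].
Proof.
have cond1 : kstar_cond md K y 1.
  rewrite /kstar_cond subr_ge0 mul1r subn1 /= (_ : (K - 1).+1 = K); last by lia.
  case: (leqP K n) => Kn; last first.
    rewrite {1}/xt nth_default ?size_sortmag; last by lia.
    by rewrite sumr_ge0 // => j _; apply: xt_ge0.
  by rewrite big_ltn ?ltnS // lerDl sumr_ge0 // => j _; apply: xt_ge0.
have [|k] := eq_bigmax_cond (fun k : 'I_K.+1 => nat_of_ord k)
  (A := [pred k : 'I_K.+1 | (0 < k)%N && kstar_cond md K y k]).
  by apply/card_gt0P; exists (Ordinal (K_gt0 : (1 < K.+1)%N)); rewrite inE /= cond1.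
rewrite inE => /andP [k_gt0 condk] kE.
by rewrite /kstar kE; split; rewrite // -ltnS ltn_ord.
Qed.

Lemma Q2_ge0 : 0 <= Q2 md K y.
Proof.
have [] := kstar_valid; rewrite /Q2 /kstar_cond; set k := kstar md K y => k_gt0 kK.
set S := \sum_(_ <= j < _) xt md y j; set M := xt md y (K.+1 - k) => cond.
have sq_le : \sum_((K - k).+1 <= j < n.+1) xt md y j ^+ 2 <= M * S.
  rewrite /S mulr_sumr; apply: ler_sum_nat => j /andP[j_ge _].
  by rewrite expr2 ler_wpM2r ?xt_ge0 // /M xt_antimono //; lia.
have k_gt0' : (0 < k%:R :> R) by rewrite ltr0n.
have S_ge0 : 0 <= S by rewrite sumr_ge0 // => j _; apply: xt_ge0.
apply: le_trans (lerB (lexx _) sq_le).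
have -> : (k%:R)^-1 * S ^+ 2 - M * S = (k%:R)^-1 * S * (S - k%:R * M).
  by field; rewrite gt_eqF.
by rewrite !mulr_ge0 // invr_ge0 ltW.
Qed.

Lemma kstar_head_le : (K <= n)%N ->
  (kstar md K y)%:R^-1 * \sum_((K - kstar md K y).+1 <= j < K.+1) xt md y j
    <= \sum_(K.+1 <= j < n.+1) xt md y j + xt md y K.
Proof.
move=> Kn; have [] := kstar_valid; rewrite /kstar_cond.
set k := kstar md K y => k_ge1 kK.
have lo : ((K - k).+1 <= K.+1)%N by lia.
have hi : (K.+1 <= n.+1)%N by lia.
rewrite (big_cat_nat lo hi) /=.
set M := xt md y (K.+1 - k); set m := xt md y K.
set T := \sum_(K.+1 <= j < n.+1) xt md y j.
set H := \sum_((K - k).+1 <= j < K.+1) xt md y j.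
set kr : R := k%:R; set ik := kr^-1 => cond.
have T_ge0 : 0 <= T by rewrite sumr_ge0 // => j _; apply: xt_ge0.
have m_ge0 : 0 <= m by apply: xt_ge0.
have kr_ge1 : 1 <= kr by rewrite ler1n.
have ik_ge0 : 0 <= ik by rewrite invr_ge0 (le_trans ler01).
have H_le : H <= (kr - 1) * M + m.
  rewrite /H big_nat_recr /=; last by lia.
  rewrite lerD2r; apply: le_trans (ler_sum_nat (G := fun _ => M) _) _.
    by move=> j /andP[j_ge _]; rewrite /M xt_antimono //; lia.
  rewrite sumr_const_nat -mulr_natl (_ : (K - (K - k).+1)%N = k.-1); last by lia.
  by rewrite /kr -{2}(prednK k_ge1) -natr1 addrK.
have : H <= (kr - 1) * T + kr * m by nra.
move=> /(ler_wpM2l ik_ge0).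
have -> : ik * ((kr - 1) * T + kr * m) = (ik * kr) * (T + m) - ik * T by ring.
by rewrite mulVf ?gt_eqF ?(lt_le_trans ltr01) // mul1r; nra.
Qed.

Lemma Q2_le_tail : (K <= n)%N ->
  Q2 md K y <= 2 * (\sum_(K.+1 <= j < n.+1) xt md y j) * xt md y K
               + 3 * (\sum_(K.+1 <= j < n.+1) xt md y j) ^+ 2.
Proof.
move=> Kn; have := kstar_head_le Kn; have [] := kstar_valid; rewrite /Q2.
set k := kstar md K y => k_ge1 kK _.
have lo : ((K - k).+1 <= K.+1)%N by lia.
have hi : (K.+1 <= n.+1)%N by lia.
rewrite !(big_cat_nat lo hi) /=.
set m := xt md y K; set T := \sum_(K.+1 <= j < n.+1) xt md y j.
set H := \sum_((K - k).+1 <= j < K.+1) xt md y j.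
set Hq := \sum_((K - k).+1 <= j < K.+1) xt md y j ^+ 2.
set Tq := \sum_(K.+1 <= j < n.+1) xt md y j ^+ 2.
set ik := (k%:R)^-1 => H_tail.
have T_ge0 : 0 <= T by rewrite sumr_ge0 // => j _; apply: xt_ge0.
have Tq_ge0 : 0 <= Tq by rewrite sumr_ge0 // => j _; apply: sqr_ge0.
have k_gt0 : (0 : R) < k%:R by rewrite ltr0n.
have ik_ge0 : 0 <= ik by rewrite invr_ge0 ltW.
have ik_le1 : ik <= 1 by rewrite invr_le1 ?unitfE ?gt_eqF // ler1n.
have Hq_ge : H ^+ 2 * ik <= Hq.
  have := sqr_sum_le (xt md y) (K - k).+1 K.+1.
  rewrite -/H -/Hq (_ : (K.+1 - (K - k).+1)%N = k); last by lia.
  by move=> /(ler_wpM2l ik_ge0); rewrite [ik * (_ * Hq)]mulrA mulVf ?gt_eqF // mul1r mulrC.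
have -> : ik * (H + T) ^+ 2 = H ^+ 2 * ik + 2 * T * (ik * H) + ik * T ^+ 2 by ring.
have : ik * T ^+ 2 <= T ^+ 2 by rewrite ler_piMl // sqr_ge0.
have : T * (ik * H) <= T * (T + m) by rewrite ler_wpM2l.
nra.
Qed.

Lemma Q2_le0 : (K <= n)%N -> (#|[set i | (0 < md (y i 0))%R]| <= K)%N -> Q2 md K y <= 0.
Proof.
move=> Kn few; apply: le_trans (Q2_le_tail Kn) _.
have -> : \sum_(K.+1 <= j < n.+1) xt md y j = 0.
  apply/le_anti; rewrite sumr_ge0 ?andbT => [|j _]; last exact: xt_ge0.
  by apply: sum_xt_tail_le => //; lia.
by rewrite mulr0 mul0r expr0n /= mulr0 addr0.
Qed.

End Q2Bounds.

Section ScalarModel.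
Variables (R : realType) (F : comNzRingType) (cj : {rmorphism F -> F}) (md : F -> R)
  (re : {additive F -> R}) (iota : {rmorphism R -> F}).
Hypothesis md_ge0 : forall a, 0 <= md a.
Hypothesis md_eq0 : forall a, md a = 0 -> a = 0.
Hypothesis sqr_md : forall a, md a ^+ 2 = re (cj a * a).
Hypothesis re_cj : forall a, re (cj a) = re a.
Hypothesis cjK : involutive cj.
Hypothesis re_cjM_le : forall a b, re (cj a * b) <= md a * md b.
Hypothesis re_iotaM : forall t a, re (iota t * a) = t * re a.
Hypothesis cj_iota : forall t, cj (iota t) = iota t.

Lemma md0 : md 0 = 0.
Proof. by apply/eqP; rewrite -sqrf_eq0 sqr_md mulr0 raddf0. Qed.

Lemma md_eq0E a : (md a == 0) = (a == 0).
Proof. by apply/eqP/eqP => [/md_eq0 | ->]; last exact: md0. Qed.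

Lemma md_gt0 a : a != 0 -> 0 < md a.
Proof. by rewrite lt_def md_ge0 md_eq0E andbT. Qed.

Lemma re_cjMC a b : re (cj b * a) = re (cj a * b).
Proof. by rewrite -re_cj rmorphM cjK mulrC. Qed.

Lemma mdN a : md (- a) = md a.
Proof.
by apply/eqP; rewrite -(eqrXn2 (n := 2)) ?md_ge0 // !sqr_md rmorphN mulrNN.
Qed.

Lemma md_iotaM t a : md (iota t * a) = `|t| * md a.
Proof.
apply/eqP; rewrite -(eqrXn2 (n := 2)) ?md_ge0 ?mulr_ge0 //.
rewrite exprMn real_normK ?num_real // !sqr_md rmorphM cj_iota.
by rewrite mulrACA -rmorphM -expr2 re_iotaM.
Qed.

Lemma sqr_mdD a b : md (a + b) ^+ 2 = md a ^+ 2 + md b ^+ 2 + 2 * re (cj a * b).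
Proof. by rewrite !sqr_md rmorphD mulrDl !mulrDr !raddfD re_cjMC; ring. Qed.

Section Vectors.
Variable n : nat.
Implicit Types u v w x y : 'cV[F]_n.

Lemma sqnorm_ge0 v : 0 <= sqnorm md v.
Proof. by rewrite sumr_ge0 // => i _; rewrite sqr_ge0. Qed.

Lemma reinnerE u v : reinner cj re u v = \sum_i re (cj (u i 0) * v i 0).
Proof. exact: raddf_sum. Qed.

Lemma sqnormE v : sqnorm md v = reinner cj re v v.
Proof. by rewrite reinnerE; apply: eq_bigr => i _; rewrite sqr_md. Qed.

Lemma reinnerC u v : reinner cj re u v = reinner cj re v u.
Proof. by rewrite !reinnerE; apply: eq_bigr => i _; rewrite re_cjMC. Qed.

Lemma reinner0l v : reinner cj re 0 v = 0.
Proof. by rewrite reinnerE big1 // => i _; rewrite mxE rmorph0 mul0r raddf0. Qed.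

Lemma reinnerBr u v w : reinner cj re u (v - w) = reinner cj re u v - reinner cj re u w.
Proof.
by rewrite !reinnerE -sumrB; apply: eq_bigr => i _; rewrite !mxE mulrBr raddfB.
Qed.

Lemma sqnormD u v :
  sqnorm md (u + v) = sqnorm md u + sqnorm md v + 2 * reinner cj re u v.
Proof.
rewrite reinnerE mulr_sumr -!big_split; apply: eq_bigr => i _.
by rewrite mxE sqr_mdD.
Qed.

Lemma reinner_adj m (A : 'M[F]_(m, n)) r v :
  reinner cj re (adj cj A *m r) v = reinner cj re r (A *m v).
Proof.
rewrite /reinner; apply: congr1.
under eq_bigr do rewrite !mxE rmorph_sum big_distrl /=.
rewrite exchange_big /=; apply: eq_bigr => k _.
rewrite !mxE big_distrr /=; apply: eq_bigr => i _.
by rewrite !mxE rmorphM cjK mulrCA mulrA.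
Qed.

Lemma card_md y : #|[set i | (0 < md (y i 0))%R]| = Defs.card y.
Proof. by apply: eq_card => i; rewrite !inE lt_def md_ge0 md_eq0E andbT. Qed.

Lemma sqnorm_gt0 v : v != 0 -> 0 < sqnorm md v.
Proof.
case/cV0Pn => i vi0; apply: (psumr_gt0 (i0 := i)) => // [|j _]; last exact: sqr_ge0.
by rewrite exprn_gt0 // md_gt0.
Qed.

Definition coordv (j : 'I_n) (a : F) : 'cV[F]_n := \col_i (if i == j then a else 0).

Lemma addv_coordvE x j a i :
  (x + coordv j a) i 0 = if i == j then x i 0 + a else x i 0.
Proof. by rewrite !mxE; case: eqP; rewrite ?addr0. Qed.

Lemma sqnorm_coordv j a : sqnorm md (coordv j a) = md a ^+ 2.
Proof.
rewrite /sqnorm (bigD1 j) //= big1 ?addr0 ?mxE ?eqxx // => i /negPf ij.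
by rewrite mxE ij md0 expr0n.
Qed.

Lemma norm2_coordv j a : norm2 md (coordv j a) = md a.
Proof. by rewrite /norm2 sqnorm_coordv sqrtr_sqr ger0_norm. Qed.

Lemma reinner_coordv u j a : reinner cj re u (coordv j a) = re (cj (u j 0) * a).
Proof.
rewrite reinnerE (bigD1 j) //= big1 ?addr0 ?mxE ?eqxx // => i /negPf ij.
by rewrite mxE ij mulr0 raddf0.
Qed.

Lemma sqnorm_mulmx_coordv_iotaM m (A : 'M[F]_(m, n)) j t a :
  sqnorm md (A *m coordv j (iota t * a)) = t ^+ 2 * sqnorm md (A *m coordv j a).
Proof.
have coordE (c : F) k : (A *m coordv j c) k 0 = A k j * c.
  rewrite mxE (bigD1 j) //= big1 ?addr0 ?mxE ?eqxx // => i /negPf ij.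
  by rewrite mxE ij mulr0.
rewrite /sqnorm mulr_sumr; apply: eq_bigr => k _.
by rewrite !coordE mulrCA md_iotaM exprMn real_normK ?num_real.
Qed.

Lemma card_add_coordv_supp x j a : x j 0 != 0 -> (Defs.card (x + coordv j a) <= Defs.card x)%N.
Proof.
move=> xj0; apply: subset_leq_card; apply/fintype.subsetP => i.
by rewrite !inE addv_coordvE; case: (eqVneq i j) => [-> |].
Qed.

Lemma card_add_coordv x j a : (Defs.card (x + coordv j a) <= (Defs.card x).+1)%N.
Proof.
apply: (@leq_trans #|j |: [set i | x i 0 != 0]|); last first.
  by rewrite cardsU1; case: (j \notin _).
apply: subset_leq_card; apply/fintype.subsetP => i; rewrite !inE addv_coordvE.
by case: (eqVneq i j) => //= _ ->; rewrite orbT.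
Qed.

Lemma stationary_path_ge0 (g : 'cV[F]_n -> R) x (p : R -> 'cV[F]_n) c al be t0 :
  stationary cj md re g x -> 0 < c -> 0 < t0 ->
  (forall t, 0 < t -> norm2 md (p t - x) = t * c) ->
  (forall t, 0 < t -> t < t0 -> g (p t) - g x <= t * al + t ^+ 2 * be) ->
  0 <= al.
Proof.
move=> st c_gt0 t0_gt0 p_dist g_le; rewrite leNgt; apply/negP => al_lt0.
have [|delta delta_gt0 near_x] := st (- al / (4 * c)).
  by rewrite divr_gt0 ?mulr_gt0 // oppr_gt0.
have [t [t_gt0 t_lt tc_lt tbe_le]] :
    exists t, [/\ 0 < t, t < t0, t * c < delta & t * be <= - al / 2].
  pose t := Num.min (t0 / 2) (Num.min (delta / (2 * c)) (- al / (2 * (`|be| + 1)))).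
  have be1_gt0 : 0 < `|be| + 1 by rewrite ltr_wpDl.
  have t_gt0 : 0 < t by rewrite !lt_min !divr_gt0 ?mulr_gt0 ?oppr_gt0.
  have t_le0 : t <= t0 / 2 by rewrite ge_min lexx.
  have t_le1 : t <= delta / (2 * c) by rewrite !ge_min lexx orbT.
  have t_le2 : t <= - al / (2 * (`|be| + 1)) by rewrite !ge_min lexx !orbT.
  exists t; split => //; first lra.
    by move: t_le1; rewrite ler_pdivlMr ?mulr_gt0 //; nra.
  by move: t_le2; rewrite ler_pdivlMr ?mulr_gt0 //; have := ler_norm be; nra.
have tc_gt0 : 0 < t * c by rewrite mulr_gt0.
have /near_x : 0 < norm2 md (p t - x) < delta by rewrite p_dist // tc_gt0 tc_lt.
rewrite reinner0l subr0 p_dist // ler_pdivlMr //.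
have -> : - (- al / (4 * c)) * (t * c) = al * t / 4 by field; rewrite gt_eqF.
have := g_le t t_gt0 t_lt; nra.
Qed.

End Vectors.

Lemma beta_sqnorm_le m n (A : 'M[F]_(m, n)) k (v : 'cV[F]_n) : (Defs.card v <= k)%N ->
  beta md A k ^+ 2 * sqnorm md v <= sqnorm md (A *m v).
Proof.
move=> card_v; have [-> | v0] := eqVneq v 0.
  rewrite [sqnorm md 0]/sqnorm big1 ?mulr0 ?sqnorm_ge0 // => i _.
  by rewrite mxE md0 expr0n.
pose E : set R := [set r | exists y : 'cV[F]_n,
  [/\ y != 0, (Defs.card y <= k)%N & r = norm2 md (A *m y) / norm2 md y]]%classic.
have -> : beta md A k = inf E by [].
have E_ge0 r : E r -> 0 <= r by move=> [y [_ _ ->]]; rewrite divr_ge0 ?sqrtr_ge0.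
have Ev : E (norm2 md (A *m v) / norm2 md v) by exists v.
have beta_ge0 : 0 <= inf E := lb_le_inf (ex_intro _ _ Ev) E_ge0.
have beta_le : inf E <= norm2 md (A *m v) / norm2 md v := ge_inf (ex_intro _ 0 E_ge0) Ev.
have nv_gt0 : 0 < norm2 md v by rewrite sqrtr_gt0 sqnorm_gt0.
move: beta_le; rewrite ler_pdivlMr // => beta_le.
have nb_ge0 : 0 <= inf E * norm2 md v by rewrite mulr_ge0 // ltW.
have := ler_pM nb_ge0 nb_ge0 beta_le beta_le.
by rewrite mulrACA -!expr2 /norm2 !sqr_sqrtr ?sqnorm_ge0.
Qed.

Section LeastSquares.
Variables (m n K : nat) (A : 'M[F]_(m, n)) (b : 'cV[F]_m).
Hypotheses (K_gt0 : (0 < K)%N) (Kn : (K <= n)%N).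
Implicit Types x : 'cV[F]_n.
Local Notation Kreg := (Kreg md A b K).
Local Notation grad x := (adj cj A *m (A *m x - b)).

Definition gdstep x := x - grad x.

Lemma gdstepE x : (1%:M - adj cj A *m A) *m x + adj cj A *m b = gdstep x.
Proof. by rewrite /gdstep mulmxBl mul1mx mulmxBr mulmxA opprB addrA addrAC. Qed.

Lemma gdstep_entry x j : gdstep x j 0 = x j 0 - grad x j 0.
Proof. by rewrite !mxE. Qed.

Lemma Kreg_add_coordv x j a :
  Kreg (x + coordv j a) - Kreg x =
  Q2 md K (x + coordv j a) - Q2 md K x
  + 2 * re (cj (grad x j 0) * a) + sqnorm md (A *m coordv j a).
Proof.
rewrite /Defs.Kreg (_ : A *m _ - b = (A *m x - b) + A *m coordv j a).
  by rewrite sqnormD -reinner_adj reinner_coordv; lra.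
by rewrite mulmxDr addrAC.
Qed.

Lemma stationary_coord_ge0 x j u D E t0 :
  stationary cj md re Kreg x -> u != 0 -> 0 < t0 ->
  (forall t, 0 < t -> t < t0 ->
     Q2 md K (x + coordv j (iota t * u)) - Q2 md K x <= t * D + t ^+ 2 * E) ->
  0 <= D + 2 * re (cj (grad x j 0) * u).
Proof.
move=> st u0 t0_gt0 Q2_le; set C := sqnorm md (A *m coordv j u).
apply: (stationary_path_ge0 (p := fun t => x + coordv j (iota t * u))
  (be := E + C) st (md_gt0 u0) t0_gt0) => [t t_gt0 | t t_gt0 t_lt].
  by rewrite addrC addKr norm2_coordv md_iotaM gtr0_norm.
rewrite Kreg_add_coordv sqnorm_mulmx_coordv_iotaM -/C mulrCA re_iotaM.
by have := Q2_le t t_gt0 t_lt; lra.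
Qed.

Lemma grad_eq0 x j : stationary cj md re Kreg x ->
  (forall a, (Defs.card (x + coordv j a) <= K)%N) -> grad x j 0 = 0.
Proof.
move=> st small; set w := grad x j 0; apply/eqP; apply: contraT => w0.
have Nw0 : - w != 0 by rewrite oppr_eq0.
have Q2_step t : 0 < t -> t < 1 ->
    Q2 md K (x + coordv j (iota t * - w)) - Q2 md K x <= t * 0 + t ^+ 2 * 0.
  move=> _ _; rewrite !mulr0 addr0 subr_le0; apply: le_trans (Q2_ge0 md_ge0 x K_gt0).
  by apply: Q2_le0 => //; rewrite card_md.
have := stationary_coord_ge0 st Nw0 ltr01 Q2_step.
by rewrite add0r mulrN raddfN -sqr_md; have := md_gt0 w0; nra.
Qed.

Lemma grad_le_supp x i j : stationary cj md re Kreg x -> Defs.card x = K ->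
  x j 0 = 0 -> x i 0 != 0 -> md (grad x j 0) <= md (x i 0).
Proof.
move=> st card_x xj0 xi0; set w := grad x j 0; set mu := md w; set xi := md (x i 0).
rewrite leNgt; apply/negP => xi_lt.
have xi_gt0 : 0 < xi by apply: md_gt0.
have mu_gt0 : 0 < mu by apply: lt_trans xi_lt.
have Nw0 : - w != 0 by rewrite oppr_eq0 -md_eq0E gt_eqF.
have xi_mu_gt0 : 0 < xi / mu by rewrite divr_gt0.
suff : 0 <= 2 * mu * xi + 2 * re (cj w * - w).
  by rewrite mulrN raddfN -sqr_md -/mu; nra.
apply: (stationary_coord_ge0 (E := 3 * mu ^+ 2) st Nw0 xi_mu_gt0) => t t_gt0.
rewrite ltr_pdivlMr // => t_lt; set y := x + coordv j (iota t * - w).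
have tmu_gt0 : 0 < t * mu by rewrite mulr_gt0.
have yj : md (y j 0) = t * mu.
  by rewrite addv_coordvE eqxx xj0 add0r md_iotaM mdN gtr0_norm.
have yl l : l != j -> y l 0 = x l 0 by move=> /negPf lj; rewrite addv_coordvE lj.
have supp_x l v : 0 <= v -> v < md (y l 0) -> l != j -> x l 0 != 0.
  by move=> v_ge0 v_lt /yl yx; rewrite -md_eq0E -yx gt_eqF // (le_lt_trans v_ge0).
have tail_le : \sum_(K.+1 <= l < n.+1) xt md y l <= t * mu.
  apply: sum_xt_tail_le => //; first exact: ltW.
    rewrite -card_x; apply: subset_leq_card; apply/fintype.subsetP => l; rewrite !inE.
    case: (eqVneq l j) => [-> | lj tmu_lt]; first by rewrite yj ltxx.
    exact: supp_x (ltW tmu_gt0) tmu_lt lj.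
  by rewrite card_md -card_x card_add_coordv.
have top_le : xt md y K <= xi.
  apply: xt_le_of_card => //; first exact: ltW.
  rewrite -card_x /Defs.card (cardsD1 i [set l | x l 0 != 0]) inE xi0 add1n ltnS.
  apply: subset_leq_card; apply/fintype.subsetP => l; rewrite !inE.
  case: (eqVneq l j) => [-> | lj xi_lt_l]; first by rewrite yj ltNge ltW.
  apply/andP; split; last exact: supp_x (ltW xi_gt0) xi_lt_l lj.
  by rewrite (yl _ lj) in xi_lt_l; apply: contraTneq xi_lt_l => ->; rewrite ltxx.
have := Q2_le_tail md_ge0 y K_gt0 Kn; have := Q2_ge0 md_ge0 x K_gt0.
have := xt_ge0 md_ge0 y K.
have : 0 <= \sum_(K.+1 <= l < n.+1) xt md y l by rewrite sumr_ge0 // => l _; apply: xt_ge0.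
nra.
Qed.

Lemma gdstep_supp x j : stationary cj md re Kreg x -> (Defs.card x <= K)%N ->
  x j 0 != 0 -> gdstep x j 0 = x j 0.
Proof.
move=> st card_x xj0; rewrite gdstep_entry (grad_eq0 st) ?subr0 // => a.
exact: leq_trans (card_add_coordv_supp _ xj0) card_x.
Qed.

Lemma gdstep_eq0 x j : stationary cj md re Kreg x -> (Defs.card x < K)%N ->
  x j 0 = 0 -> gdstep x j 0 = 0.
Proof.
move=> st card_x xj0; rewrite gdstep_entry xj0 (grad_eq0 st) ?subr0 // => a.
exact: leq_trans (card_add_coordv _ _ _) card_x.
Qed.

Lemma gdstep_off_le x i j : stationary cj md re Kreg x -> (Defs.card x <= K)%N ->
  x j 0 = 0 -> x i 0 != 0 -> md (gdstep x j 0) <= md (x i 0).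
Proof.
move=> st card_x xj0 xi0; case: (ltnP (Defs.card x) K) => [lt_K | ge_K].
  by rewrite gdstep_eq0 // md0.
rewrite gdstep_entry xj0 sub0r mdN; apply: grad_le_supp => //.
by apply/eqP; rewrite eqn_leq card_x.
Qed.

Section TwoStationaryPoints.
Variables (x1 x2 : 'cV[F]_n) (beta2 : R).
Hypotheses (st1 : stationary cj md re Kreg x1) (st2 : stationary cj md re Kreg x2).
Hypotheses (card_x1 : Defs.card x1 = K) (card_x2 : (Defs.card x2 <= K)%N).
Hypothesis restricted_isometry : forall v : 'cV[F]_n,
  (Defs.card v <= 2 * K)%N -> beta2 * sqnorm md v <= sqnorm md (A *m v).
Hypothesis gap : xt md (gdstep x1) K.+1 < (2 * beta2 - 1) * xt md (gdstep x1) K.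

Local Notation z1 := (gdstep x1).
Local Notation z2 := (gdstep x2).
Local Notation d := (x1 - x2).
Let S1 := [set i | x1 i 0 != 0].
Let S2 := [set i | x2 i 0 != 0].
Let only1 := S1 :\: S2.
Let only2 := S2 :\: S1.
Let phi i := re (cj (d i 0) * (z1 i 0 - z2 i 0)) - (1 - beta2) * md (d i 0) ^+ 2.

Lemma in_only1 i : (i \in only1) = (x1 i 0 != 0) && (x2 i 0 == 0).
Proof. by rewrite !inE negbK andbC. Qed.

Lemma in_only2 i : (i \in only2) = (x1 i 0 == 0) && (x2 i 0 != 0).
Proof. by rewrite !inE negbK. Qed.

Lemma beta2_gt_half : 1 < 2 * beta2.
Proof.
rewrite ltNge; apply/negP => B_le.
have : (2 * beta2 - 1) * xt md z1 K <= 0 by rewrite mulr_le0_ge0 ?xt_ge0 // subr_le0.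
by move=> /(lt_le_trans gap); rewrite ltNge xt_ge0.
Qed.

Lemma sum_phi_le0 : \sum_i phi i <= 0.
Proof.
have card_d : (Defs.card d <= 2 * K)%N.
  apply: leq_trans (_ : #|S1 :|: S2| <= _)%N.
    apply: subset_leq_card; apply/fintype.subsetP => l; rewrite !inE !mxE.
    by apply: contraR; rewrite negb_or !negbK => /andP[/eqP -> /eqP ->]; rewrite subrr.
  have cS1 : #|S1| = K := card_x1; have cS2 : (#|S2| <= K)%N := card_x2.
  by rewrite cardsU; lia.
have z12 : z1 - z2 = d - adj cj A *m (A *m d).
  have -> : A *m d = (A *m x1 - b) - (A *m x2 - b) by rewrite mulmxBr opprB addrA subrK.
  rewrite mulmxBr /gdstep; set w1 := adj cj A *m _; set w2 := adj cj A *m _.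
  by apply/matrixP => i k; rewrite !mxE; ring.
have -> : \sum_i phi i = reinner cj re d (z1 - z2) - (1 - beta2) * sqnorm md d.
  rewrite reinnerE /sqnorm mulr_sumr -sumrB; apply: eq_bigr => i _.
  by rewrite /phi !mxE.
rewrite z12 reinnerBr -sqnormE reinnerC reinner_adj -sqnormE.
by have := restricted_isometry card_d; lra.
Qed.

Lemma z1_top i j : i \in S1 -> j \notin S1 -> md (z1 j 0) <= md (z1 i 0).
Proof.
rewrite !inE negbK => x1i0 /eqP x1j0.
rewrite (gdstep_supp st1 (eq_leq card_x1) x1i0).
exact: gdstep_off_le st1 (eq_leq card_x1) x1j0 x1i0.
Qed.

Lemma d_entry i : d i 0 = x1 i 0 - x2 i 0.
Proof. by rewrite !mxE. Qed.

Lemma phi_both i : x1 i 0 != 0 -> x2 i 0 != 0 -> phi i = beta2 * md (d i 0) ^+ 2.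
Proof.
move=> x1i0 x2i0; rewrite /phi (gdstep_supp st1 (eq_leq card_x1) x1i0).
by rewrite (gdstep_supp st2 card_x2 x2i0) -d_entry -sqr_md; ring.
Qed.

Lemma phi_out i : i \notin only1 -> i \notin only2 -> 0 <= phi i.
Proof.
rewrite in_only1 in_only2.
case: (eqVneq (x1 i 0) 0) => x1i0; case: (eqVneq (x2 i 0) 0) => x2i0 //= _ _.
  by rewrite /phi d_entry x1i0 x2i0 subrr rmorph0 mul0r raddf0 md0 expr0n /= mulr0 subrr.
by rewrite phi_both // mulr_ge0 ?sqr_ge0 //; have := beta2_gt_half; lra.
Qed.

Lemma phi_only1_ge i : x1 i 0 != 0 -> x2 i 0 = 0 ->
  beta2 * md (z1 i 0) ^+ 2 - md (z1 i 0) * md (z2 i 0) <= phi i.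
Proof.
move=> x1i0 x2i0; rewrite /phi d_entry x2i0 subr0 -(gdstep_supp st1 (eq_leq card_x1) x1i0).
by rewrite mulrBr raddfB -sqr_md; have := re_cjM_le (z1 i 0) (z2 i 0); lra.
Qed.

Lemma phi_only2_ge j : x1 j 0 = 0 -> x2 j 0 != 0 ->
  beta2 * md (z2 j 0) ^+ 2 - md (z2 j 0) * md (z1 j 0) <= phi j.
Proof.
move=> x1j0 x2j0; rewrite /phi d_entry x1j0 sub0r -(gdstep_supp st2 card_x2 x2j0).
rewrite mdN rmorphN mulNr mulrBr raddfN raddfB -sqr_md.
by have := re_cjM_le (z2 j 0) (z1 j 0); lra.
Qed.

Lemma phi_pair i j : i \in only1 -> j \in only2 -> 0 < phi i + phi j.
Proof.
rewrite in_only1 in_only2 => /andP[x1i0 /eqP x2i0] /andP[/eqP x1j0 x2j0].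
have cS1 : #|S1| = K := card_x1.
have p_ge : xt md z1 K <= md (z1 i 0).
  by rewrite -cS1; apply: (xt_le_top md_ge0 z1_top); rewrite inE.
have s_le : md (z1 j 0) <= xt md z1 K.+1.
  by rewrite -cS1; apply: (nontop_le_xt md_ge0 z1_top); rewrite inE negbK x1j0.
have q_le : md (z2 i 0) <= md (z2 j 0).
  by rewrite (gdstep_supp st2 card_x2 x2j0); apply: gdstep_off_le.
have r_gt0 : 0 < md (z2 j 0) by rewrite (gdstep_supp st2 card_x2 x2j0) md_gt0.
have := phi_only1_ge x1i0 x2i0; have := phi_only2_ge x1j0 x2j0; have := beta2_gt_half.
have := md_ge0 (z2 i 0); have := md_ge0 (z1 j 0); have := md_ge0 (z1 i 0).
set p := md (z1 i 0); set q := md (z2 i 0); set r := md (z2 j 0); set s := md (z1 j 0).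
move=> p_ge0 s_ge0 q_ge0 beta2_gt phi_j_ge phi_i_ge.
(* By the gap, [r * s < (2 beta2 - 1) * p * r]; what remains is [beta2 * (p - r)^2]. *)
have e1 : p * q <= p * r by rewrite ler_wpM2l.
have e2 : r * s < r * ((2 * beta2 - 1) * p).
  have c_lt : xt md z1 K.+1 < (2 * beta2 - 1) * p.
    by apply: lt_le_trans gap _; rewrite ler_wpM2l //; lra.
  by apply: le_lt_trans (ler_wpM2l (ltW r_gt0) s_le) _; rewrite ltr_pM2l.
have : 0 <= beta2 * (p - r) ^+ 2 by rewrite mulr_ge0 ?sqr_ge0 //; lra.
nra.
Qed.

Lemma phi_only1_gt0 i : (Defs.card x2 < K)%N -> i \in only1 -> 0 < phi i.
Proof.
move=> card_lt; rewrite in_only1 => /andP[x1i0 /eqP x2i0].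
have := phi_only1_ge x1i0 x2i0; rewrite (gdstep_eq0 st2 card_lt x2i0) md0 mulr0 subr0.
have : 0 < md (z1 i 0) by rewrite (gdstep_supp st1 (eq_leq card_x1) x1i0) md_gt0.
have := beta2_gt_half; nra.
Qed.

Lemma card_only :
  (#|only2| <= #|only1|)%N /\ ((#|only2| < #|only1|)%N -> (Defs.card x2 < K)%N).
Proof.
have cS1 : #|S1| = K := card_x1; have cS2 : (#|S2| <= K)%N := card_x2.
have := subset_leq_card (subsetIr S1 S2).
by rewrite /only1 /only2 !cardsD (finset.setIC S2 S1) -[Defs.card x2]/#|S2|; lia.
Qed.

Lemma sum_phi_gt0 : x1 != x2 -> 0 < \sum_i phi i.
Proof.
move=> x12; have [only21_le only21_lt] := card_only.
case: (posnP #|only1|) => [only1_0 | only1_gt0]; last first.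
  apply: (sum_gt0_pairing _ only1_gt0 only21_le phi_out phi_pair
    (fun h i => @phi_only1_gt0 i (only21_lt h))).
  rewrite finset.disjoints_subset; apply/fintype.subsetP => i.
  by rewrite in_only1 finset.in_setC in_only2 => /andP[/negPf ->].
have only2_0 : #|only2| = 0%N by lia.
have out i : (i \notin only1) && (i \notin only2).
  by rewrite (cards0_eq only1_0) (cards0_eq only2_0) !inE.
have [i0 di0] : exists i0, d i0 0 != 0 by apply/cV0Pn; rewrite subr_eq0.
apply: (psumr_gt0 (i0 := i0)) => // [|i _]; last by case/andP: (out i); apply: phi_out.
case/andP: (out i0); rewrite in_only1 in_only2; move: di0; rewrite d_entry.
case: (eqVneq (x1 i0 0) 0) => [-> | x1i0]; case: (eqVneq (x2 i0 0) 0) => [-> | x2i0] //=.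
  by rewrite subrr eqxx.
move=> di0 _ _; rewrite phi_both // mulr_gt0 ?exprn_gt0 ?md_gt0 ?d_entry //.
by have := beta2_gt_half; lra.
Qed.

Lemma stationary_eq : x1 = x2.
Proof.
apply/eqP; apply: contraT => x12.
by have := sum_phi_gt0 x12; have := sum_phi_le0; lra.
Qed.

End TwoStationaryPoints.

End LeastSquares.

Lemma thm53_claim_holds : thm53_claim cj md re.
Proof.
move=> m n A b K x1 x2 K_gt0 st1 card_x1 z' gap x21 st2.
have Kn : (K <= n)%N by rewrite -card_x1 -[X in (_ <= X)%N]card_ord max_card.
rewrite ltnNge; apply/negP => card_x2.
rewrite /z' gdstepE in gap.
have x12 : x1 = x2.
  apply: (stationary_eq K_gt0 Kn st1 st2 card_x1 card_x2 _ gap) => v card_v.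
  exact: beta_sqnorm_le.
by rewrite x12 eqxx in x21.
Qed.

End ScalarModel.

Section ComplexModel.
Variable R : realType.
Local Open Scope complex_scope.
Implicit Types x y : R[i].

Lemma normc_ge0 x : 0 <= Normc.normc x.
Proof. by case: x => a b; apply: sqrtr_ge0. Qed.

Lemma sqr_normc x : Normc.normc x ^+ 2 = complex.Re (x^* * x).
Proof. by case: x => a b /=; rewrite sqr_sqrtr ?addr_ge0 ?sqr_ge0 //; ring. Qed.

Lemma Re_conjc x : complex.Re x^* = complex.Re x.
Proof. by case: x. Qed.

Lemma Re_conjcM_le x y : complex.Re (x^* * y) <= Normc.normc x * Normc.normc y.
Proof.
case: x y => a b [c d] /=; rewrite -sqrtrM ?addr_ge0 ?sqr_ge0 //.
apply: le_trans (ler_norm _) _; rewrite -sqrtr_sqr ler_sqrt ?mulr_ge0 ?addr_ge0 ?sqr_ge0 //.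
by have := sqr_ge0 (a * d - b * c); nra.
Qed.

Lemma Re_realM (t : R) x : complex.Re (t%:C * x) = t * complex.Re x.
Proof. by case: x => a b /=; ring. Qed.

End ComplexModel.

Theorem theorem5p3 (R : realType) :
  thm53_claim (F := R) id (fun x => `|x|) id /\
  thm53_claim (F := R[i]) (@conjc R) (@Normc.normc R) (@complex.Re R).
Proof.
split.
- apply: (thm53_claim_holds (cj := idfun) (md := Num.norm) (re := idfun) (iota := idfun))
    => // [a /eqP | a | a b].
  + by rewrite normr_eq0 => /eqP.
  + by rewrite real_normK ?num_real.
  + by rewrite -normrM ler_norm.
- apply: (@thm53_claim_holds R R[i] (@conjc R) _ (@complex.Re R) (real_complex R)).
  + exact: normc_ge0.
  + exact: Normc.eq0_normc.
  + exact: sqr_normc.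
  + exact: Re_conjc.
  + exact: conjcK.
  + exact: Re_conjcM_le.
  + exact: Re_realM.
  + exact: conjc_real.
Qed.
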